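(* Fix $k\ge 1$ and a length $T$, and call a binary signal of length $T$ admissible if it contains no more than $k$ consecutive $0$ bits. An admissible signal is minimal if and only if every $1$ bit of the signal is surrounded by at least $k$ $0$ bits, i.e. if a $1$ bit is immediately preceded by exactly $p$ consecutive $0$ bits and immediately succeeded by exactly $q$ consecutive $0$ bits, then $p+q\ge k$.
   Context: Partial order: $\sigma_1\preceq\sigma_2$ if for every $i$ with $\sigma_1(i)=1$ we also have $\sigma_2(i)=1$. An admissible signal $\sigma$ is minimal if there is no other admissible signal $\bar\sigma\neq\sigma$ of the same length with $\bar\sigma\preceq\sigma$. *)

(* A binary signal of length T is a  s : seq bool  with
   size s = T; bit i (0-based) is  nth false s i  (true = 1, false = 0). *)
From mathcomp Require Import all_boot.
Set Implicit Arguments. Unset Strict Implicit. Unset Printing Implicit Defensive.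

(* s contains no more than k consecutive 0 bits: every window of k+1
   consecutive positions contains a 1 bit. *)
Definition admissible (k : nat) (s : seq bool) : Prop :=
  forall i, i + k < size s -> exists j, i <= j <= i + k /\ nth false s j.

Definition sig_le (s1 s2 : seq bool) : Prop :=
  forall i, i < size s1 -> nth false s1 i -> nth false s2 i.

Definition minimal (k : nat) (s : seq bool) : Prop :=
  admissible k s /\
  forall s', size s' = size s -> admissible k s' -> sig_le s' s -> s' = s.

Definition zeros_before (s : seq bool) (i p : nat) : Prop :=
  p <= i /\ (forall j, i - p <= j < i -> ~~ nth false s j) /\
  (p = i \/ nth false s (i - p - 1)).

Definition zeros_after (s : seq bool) (i q : nat) : Prop :=
  i + q < size s /\ (forall j, i < j <= i + q -> ~~ nth false s j) /\
  (i + q + 1 = size s \/ nth false s (i + q + 1)).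

Definition surrounded (k : nat) (s : seq bool) : Prop :=
  forall i p q, i < size s -> nth false s i ->
    zeros_before s i p -> zeros_after s i q -> k <= p + q.

(* Clearing a 1 bit of an admissible signal keeps it admissible exactly when
   the run of 0 bits it creates, of length p + q + 1, still fits in a window
   of k + 1 positions, i.e. when p + q < k.  So if some 1 bit has p + q < k,
   clearing it gives a smaller admissible signal.  Conversely, if every 1 bit
   has p + q >= k, any signal s' below s misses some 1 bit i of s, and then
   s' vanishes on the whole window [i - p, i - p + k], which lies inside the
   gap [i - p, i + q] around i; so s' is not admissible. *)
From mathcomp Require Import all_boot.
From mathcomp Require Import zify.

Set Implicit Arguments.
Unset Strict Implicit.
Unset Printing Implicit Defensive.

Lemma zeros_before_exists (s : seq bool) i : exists p, zeros_before s i p.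
Proof.
elim: i => [|i [p [hpi [hzero hend]]]]; first by exists 0; split; [|split; [lia|left]].
case hsi: (nth false s i).
  exists 0; split=> //; split; first lia.
  by right; rewrite subn0 subn1.
exists p.+1; split; first lia; split.
  move=> j hj; case: (ltngtP j i) => hji; [apply: hzero; lia|lia|by rewrite hji hsi].
case: hend => [->|hend]; [by left|right].
by have -> : i.+1 - p.+1 - 1 = i - p - 1 by lia.
Qed.

Lemma zeros_after_exists (s : seq bool) i : i < size s -> exists q, zeros_after s i q.
Proof.
move=> hi; have [d] : exists d, i + d.+1 = size s by exists (size s - i.+1); lia.
elim: d i {hi} => [|d IHd] i hid.
  by exists 0; split; [lia|split; [lia|left; lia]].
case hsi: (nth false s i.+1).
  by exists 0; split; [lia|split; [lia|right; rewrite addn0 addn1]].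
have [q [hq [hzero hend]]] := IHd i.+1 ltac:(lia).
exists q.+1; split; first lia; split.
  move=> j hj; case: (eqVneq j i.+1) => [->|hji]; first by rewrite hsi.
  by apply: hzero; lia.
by have -> : i + q.+1 + 1 = i.+1 + q + 1 by lia.
Qed.

Lemma size_set_nth_false (s : seq bool) i :
  i < size s -> size (set_nth false s i false) = size s.
Proof. by move=> hi; rewrite size_set_nth; apply/maxn_idPr. Qed.

Lemma nth_set_nth_false (s : seq bool) i j :
  nth false (set_nth false s i false) j = (j != i) && nth false s j.
Proof. by rewrite nth_set_nth /=; case: eqVneq. Qed.

Lemma sig_le_set_nth_false (s : seq bool) i : sig_le (set_nth false s i false) s.
Proof. by move=> j _; rewrite nth_set_nth_false => /andP[]. Qed.

Section GapAroundOne.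

Variables (k : nat) (s : seq bool) (i p q : nat).
Hypotheses (hbefore : zeros_before s i p) (hafter : zeros_after s i q).

Lemma gap_one_eq_center j : i - p <= j <= i + q -> nth false s j -> j = i.
Proof.
case: hbefore => _ [zb _]; case: hafter => _ [za _] hj hsj.
by case: (ltngtP j i) => // hji; [move: (zb j) | move: (za j)];
  rewrite hsj => /(_ ltac:(lia)).
Qed.

Lemma admissible_clear_narrow_gap :
  p + q < k -> admissible k s -> admissible k (set_nth false s i false).
Proof.
case: hbefore => hp [_ hend_before]; case: hafter => hq [_ hend_after].
have hi : i < size s by lia.
move=> hpq hadm a; rewrite size_set_nth_false // => ha.
have [j [hj hsj]] := hadm a ha.
case: (eqVneq j i) => [eji|hji]; last by exists j; rewrite nth_set_nth_false hji.
(* the window [a, a + k] is longer than the gap around i, so it sticks out of it *)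
have [ha_left|ha_right] : a < i - p \/ i + q < a + k by lia.
- case: hend_before => [|hb]; first lia.
  by exists (i - p - 1); rewrite nth_set_nth_false hb andbT; split; [lia|apply/eqP; lia].
- case: hend_after => [|ha']; first lia.
  by exists (i + q + 1); rewrite nth_set_nth_false ha' andbT; split; [lia|apply/eqP; lia].
Qed.

Lemma below_wide_gap_not_admissible (s' : seq bool) :
  k <= p + q -> size s' = size s -> sig_le s' s -> ~~ nth false s' i ->
  ~ admissible k s'.
Proof.
case: hbefore => hp _; case: hafter => hq _.
move=> hpq hsize hle hs'i hadm'.
have [j [hj hs'j]] := hadm' (i - p) ltac:(lia).
have hsj := hle j ltac:(lia) hs'j.
have eji : j = i by apply: gap_one_eq_center hsj; lia.
by move: hs'i; rewrite -eji hs'j.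
Qed.

End GapAroundOne.

Lemma minimal_surrounded k (s : seq bool) : minimal k s -> surrounded k s.
Proof.
move=> [hadm hmin] i p q hi hsi hbefore hafter; rewrite leqNgt; apply/negP => hpq.
have := hmin _ (size_set_nth_false hi)
  (admissible_clear_narrow_gap hbefore hafter hpq hadm) (@sig_le_set_nth_false s i).
by move=> /(congr1 (nth false ^~ i)); rewrite nth_set_nth_false eqxx hsi.
Qed.

Lemma surrounded_minimal k (s : seq bool) :
  admissible k s -> surrounded k s -> minimal k s.
Proof.
move=> hadm hsur; split=> // s' hsize hadm' hle.
apply: (eq_from_nth (x0 := false)) => // i hi.
case hs'i: (nth false s' i); first by rewrite (hle i hi hs'i).
case hsi: (nth false s i) => //; rewrite hsize in hi.
have [p hbefore] := zeros_before_exists s i.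
have [q hafter] := zeros_after_exists hi.
by case: (below_wide_gap_not_admissible hbefore hafter
  (hsur i p q hi hsi hbefore hafter) hsize hle); rewrite ?hs'i.
Qed.

Theorem mainTheorem7 (k T : nat) (hk : 1 <= k) (s : seq bool)
  (hT : size s = T) (hadm : admissible k s) :
  minimal k s <-> surrounded k s.
Proof. by split; [apply: minimal_surrounded | apply: surrounded_minimal]. Qed.
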